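(* Let $d,N\in\mathbb{N}$, $\gamma_1,\dots,\gamma_N\in\mathbb{R}$, let $(\Omega,\mathcal{F},\mathbb{P})$ be a probability space, let $X_n\colon\Omega\to\mathbb{R}^d$, $n\in\{1,\dots,N\}$, be independent random variables, let $m\in\{1,\dots,N\}$ satisfy $\gamma_m\neq0$, and assume that $X_m$ is non-degenerate. Then $\sum_{n=1}^N\gamma_nX_n$ is non-degenerate.
   Context: For a Borel measure $\mu$ on $\mathbb{R}^d$, $\operatorname{supp}(\mu)=\{x\in\mathbb{R}^d\colon\mu(A)>0\text{ for every open }A\ni x\}$. For a random variable $X$, $\operatorname{supp}(X)=\operatorname{supp}(\mathbb{P}_X)$ where $\mathbb{P}_X$ is the law of $X$. $X$ is called non-degenerate if the interior of $\operatorname{supp}(X)$ is non-empty. *)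

From HB Require Import structures.
From mathcomp Require Import all_boot all_order all_algebra.
From mathcomp Require Import all_classical all_reals all_analysis.
Set Implicit Arguments. Unset Strict Implicit. Unset Printing Implicit Defensive.
Import Order.TTheory GRing.Theory Num.Theory.
Import numFieldNormedType.Exports.
Local Open Scope classical_set_scope.
Local Open Scope ring_scope.

Definition borel_rV (R : realType) (d : nat) : set (set 'rV[R]_d) :=
  <<s [set A : set 'rV[R]_d | open A] >>.

Definition rv_rV (dT : measure_display) (T : measurableType dT) (R : realType)
  (d : nat) (X : T -> 'rV[R]_d) : Prop :=
  forall B, borel_rV B -> measurable (X @^-1` B).

Definition independent_rV (dT : measure_display) (T : measurableType dT)
  (R : realType) (P : probability T R) (d N : nat)
  (X : 'I_N -> T -> 'rV[R]_d) : Prop :=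
  forall (S : {set 'I_N}) (B : 'I_N -> set 'rV[R]_d),
    (forall i, borel_rV (B i)) ->
    P (\bigcap_(i in [set i | i \in S]) (X i @^-1` B i)) =
      (\prod_(i in S) P (X i @^-1` B i))%E.

Definition supp_rV (dT : measure_display) (T : measurableType dT)
  (R : realType) (P : probability T R) (d : nat) (X : T -> 'rV[R]_d)
  : set 'rV[R]_d :=
  [set x | forall A : set 'rV[R]_d, open A -> A x -> (0 < P (X @^-1` A))%E].

Definition nondegenerate_rV (dT : measure_display) (T : measurableType dT)
  (R : realType) (P : probability T R) (d : nat) (X : T -> 'rV[R]_d) : Prop :=
  (supp_rV P X)° !=set0.

From HB Require Import structures.
From mathcomp Require Import all_boot all_order all_algebra.
From mathcomp Require Import all_classical all_reals all_analysis.
From mathcomp Require Import measurable_realfun lra.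
Set Implicit Arguments. Unset Strict Implicit. Unset Printing Implicit Defensive.
Import Order.TTheory GRing.Theory Num.Theory.
Import numFieldNormedType.Exports.
Local Open Scope classical_set_scope.
Local Open Scope ring_scope.

(* Since R^d has a countable base of rational balls, the complement of the
   support of any R^d-valued random variable is a countable union of null
   sets, so the support is non-empty.  If w_n lies in the support of X_n for
   every n, independence gives positive probability to the event that each
   X_n is within delta of w_n, and on this event sum gamma_n X_n is close to
   sum gamma_n w_n; hence sum gamma_n w_n lies in the support of the
   combination.  Freezing w_n for n <> m, the support of the combination
   contains c + gamma_m supp(X_m), and the homeomorphism z |-> c + gamma_m z
   maps a ball inside supp(X_m) onto a ball. *)

Lemma bigcup_unpickle (I : countType) (T : Type) (F : I -> set T) :
  \bigcup_i F i = \bigcup_k (if unpickle k is Some i then F i else set0).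
Proof.
apply/seteqP; split=> [x [i _ Fix]|x [k _]].
  by exists (pickle i) => //; rewrite pickleK.
by case: unpickle => // i Fix; exists i.
Qed.

Lemma negligible_bigcupT (dT : measure_display) (T : sigmaRingType dT)
    (R : realFieldType) (mu : {measure set T -> \bar R}) (I : countType)
    (F : I -> set T) :
  (forall i, mu.-negligible (F i)) -> mu.-negligible (\bigcup_i F i).
Proof.
move=> F0; rewrite bigcup_unpickle; apply: negligible_bigcup => k.
by case: unpickle => [i|]; [exact: F0 | exact: negligible_set0].
Qed.

Section rational_balls.
Variables (R : realType) (d : nat).

Definition rat_ball (qr : 'rV[rat]_d * rat) : set 'rV[R]_d :=
  ball (map_mx ratr qr.1 : 'rV[R]_d) (ratr qr.2).

Lemma nbhs_rat_ball (x : 'rV[R]_d) (A : set 'rV[R]_d) :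
  nbhs x A -> exists qr, rat_ball qr x /\ rat_ball qr `<=` A.
Proof.
move=> /nbhs_ballP[e /= e0 xeA].
have /rat_in_itvoo[r] : 0 < e / 2 by rewrite divr_gt0.
rewrite in_itv /= => /andP[r0 re].
have /fin_all_exists[q qx] :
    forall j, exists qj : rat, `|ratr qj - x ord0 j| < ratr r.
  move=> j; have /rat_in_itvoo[qj] : x ord0 j - ratr r < x ord0 j + ratr r.
    by lra.
  by rewrite in_itv /= => /andP[? ?]; exists qj; rewrite ltr_distlC; lra.
have qrx : rat_ball (\row_j q j, r) x.
  by split=> // i j; rewrite (ord1 i) !mxE; exact: qx.
exists (\row_j q j, r); split=> // v qrv; apply: xeA.
apply: (@le_ball _ _ _ (ratr r + ratr r)); first lra.
by apply: ball_triangle qrv; exact: ball_sym.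
Qed.

Lemma open_bigcup_rat_ball (A : set 'rV[R]_d) : open A ->
  A = \bigcup_(qr in [set qr | rat_ball qr `<=` A]) rat_ball qr.
Proof.
move=> oA; apply/seteqP; split=> [x Ax|x [qr qrA]]; last exact: qrA.
by have [qr [? ?]] := nbhs_rat_ball (oA x Ax); exists qr.
Qed.

End rational_balls.

Lemma continuous_coord (R : realType) (d : nat) (i : 'I_1) (j : 'I_d) :
  continuous (fun v : 'rV[R]_d => v i j).
Proof.
move=> v A /nbhs_ballP[e e0 vA]; apply/nbhs_ballP; exists e => // w [_ vw].
exact: vA (vw i j).
Qed.

Section borel_measurability.
Variables (dT : measure_display) (T : measurableType dT).
Variables (R : realType) (d : nat).
Implicit Types (X f : T -> 'rV[R]_d).

Lemma rv_rV_open X (A : set 'rV[R]_d) :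
  rv_rV X -> open A -> measurable (X @^-1` A).
Proof. by move=> hX oA; apply: hX; exact: sub_sigma_algebra. Qed.

Lemma rv_rV_rat_ball f :
  (forall qr, measurable (f @^-1` rat_ball qr)) -> rv_rV f.
Proof.
move=> fqr B borelB; rewrite -[X in measurable X]setTI.
apply: (smallest_sub (X := image_set_system setT f measurable) _ _ borelB).
  exact/sigma_algebra_image/sigma_algebra_measurable.
move=> A /= oA.
rewrite /image_set_system /= setTI (open_bigcup_rat_ball oA) preimage_bigcup.
rewrite bigcup_mkcond; apply: countable_bigcupT_measurable => [|qr].
  exact: countableP.
by case: ifP => _; [exact: fqr | exact: measurable0].
Qed.

Lemma rv_rV_coord X i j : rv_rV X -> measurable_fun setT (fun w => X w i j).
Proof.
move=> hX; apply: (measurability _ (RGenOpens.measurableE R)).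
move=> _ [_ [a [b ->]] <-]; rewrite setTI.
change (measurable (X @^-1` ((fun v => v i j) @^-1` `]a, b[))).
apply: rv_rV_open => //.
apply: open_comp => [v _|]; first exact: continuous_coord.
exact: interval_open.
Qed.

Lemma rv_rV_of_coord f :
  (forall i j, measurable_fun setT (fun w => f w i j)) -> rv_rV f.
Proof.
move=> mf; apply: rv_rV_rat_ball => -[c r]; rewrite /rat_ball /=.
have [r0|r0] := ltP 0 (ratr r : R); last first.
  rewrite (_ : _ @^-1` _ = set0); first exact: measurable0.
  by apply/seteqP; split=> // w [/lt_le_trans/(_ r0)]; rewrite ltxx.
rewrite (_ : _ @^-1` _ = \bigcap_(ij in [set: 'I_1 * 'I_d])
    ((fun w => f w ij.1 ij.2) @^-1`
       ball (map_mx ratr c ij.1 ij.2 : R) (ratr r))).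
  apply: fin_bigcap_measurable => [|[i j] _]; first exact: finite_finset.
  rewrite -[X in measurable X]setTI.
  by apply: mf => //; exact: measurable_ball.
apply/seteqP; split=> [w [_ cw] [i j] _|w cw]; first exact: cw.
by split=> // i j; exact: (cw (i, j)).
Qed.

Lemma rv_rV_lin_comb N (gamma : 'I_N -> R) (X : 'I_N -> T -> 'rV[R]_d) :
  (forall n, rv_rV (X n)) -> rv_rV (fun w => \sum_(n < N) gamma n *: X n w).
Proof.
move=> hX; apply: rv_rV_of_coord => i j.
rewrite (_ : (fun w => _) = fun w => \sum_(n < N) gamma n * X n w i j).
  apply: measurable_sum => n.
  by apply: measurable_funM; [exact: measurable_cst | exact: rv_rV_coord].
by apply/funext => w; rewrite summxE; apply: eq_bigr => n _; rewrite mxE.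
Qed.

End borel_measurability.

Lemma ler_norm_lin_combB (K : numDomainType) (V : normedModType K) N
    (gamma : 'I_N -> K) (v w : 'I_N -> V) :
  `|\sum_(n < N) gamma n *: v n - \sum_(n < N) gamma n *: w n|
    <= \sum_(n < N) `|gamma n| * `|v n - w n|.
Proof.
rewrite -sumrB; apply: le_trans (ler_norm_sum _ _ _) _.
by apply: ler_sum => n _; rewrite -scalerBr normrZ.
Qed.

Lemma ball_sub_affine_image (K : numFieldType) (V : normedModType K)
    (c z : V) (a r : K) :
  a != 0 -> ball (c + a *: z) (`|a| * r) `<=` [set c + a *: y | y in ball z r].
Proof.
move=> a0 x; rewrite -!ball_normE /ball_ /= => zx.
exists (z + a^-1 *: (x - (c + a *: z))).
  rewrite opprD addNKr normrN normrZ normfV mulrC.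
  by rewrite ltr_pdivrMr ?normr_gt0 // mulrC distrC.
by rewrite scalerDr scalerA mulfV // scale1r addrA addrC addrNK.
Qed.

Section support.
Variables (dT : measure_display) (T : measurableType dT) (R : realType)
  (P : probability T R) (d : nat).

Lemma supp_rV_neq0 (X : T -> 'rV[R]_d) : rv_rV X -> supp_rV P X !=set0.
Proof.
move=> hX; apply: contrapT => /forallNP nsupp.
pose null qr := P (X @^-1` rat_ball qr) = 0%E.
have cover : [set: T] `<=` \bigcup_(qr in null) X @^-1` rat_ball qr.
  move=> w _.
  have /existsNP[A /not_implyP[oA /not_implyP[Aw PA]]] := nsupp (X w).
  have [qr [qrw qrA]] := nbhs_rat_ball (oA _ Aw).
  exists qr => //; apply/eqP; rewrite -measure_le0.
  apply: (@le_trans _ _ (P (X @^-1` A))); last by rewrite leNgt; apply/negP.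
  by apply: le_measure; rewrite ?inE; [exact: rv_rV_open (ball_open _ _)
    | exact: rv_rV_open | move=> ? /qrA].
have : P.-negligible [set: T].
  apply: negligibleS cover _; rewrite bigcup_mkcond; apply: negligible_bigcupT.
  move=> qr; case: ifPn => [/set_mem qr0|_]; last exact: negligible_set0.
  by apply/negligibleP => //; exact: rv_rV_open (ball_open _ _).
move/(negligibleP _ measurableT) => P0.
by have := probability_setT P; rewrite P0 => /eqP; rewrite eq_sym onee_eq0.
Qed.

Lemma independent_rV_bigcap_gt0 N (X : 'I_N -> T -> 'rV[R]_d) (S : {set 'I_N})
    (B : 'I_N -> set 'rV[R]_d) :
  independent_rV P X -> (forall n, borel_rV (B n)) ->
  (forall n, 0 < P (X n @^-1` B n))%E ->
  (0 < P (\bigcap_(n in [set n | n \in S]) X n @^-1` B n))%E.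
Proof.
move=> hind borelB PB; rewrite hind //.
by apply: (big_ind (fun x => 0 < x)%E) => // x y x0 y0; exact: mule_gt0.
Qed.

Lemma supp_rV_lin_comb N (gamma : 'I_N -> R) (X : 'I_N -> T -> 'rV[R]_d)
    (w : 'I_N -> 'rV[R]_d) :
  (forall n, rv_rV (X n)) -> independent_rV P X ->
  (forall n, supp_rV P (X n) (w n)) ->
  supp_rV P (fun t => \sum_(n < N) gamma n *: X n t)
    (\sum_(n < N) gamma n *: w n).
Proof.
move=> hX hind hw A oA Aw.
have /nbhs_ballP[e /= e0 eA] := oA _ Aw.
pose K := \sum_(n < N) `|gamma n|.
have K0 : 0 <= K by apply: sumr_ge0.
pose delta := e / (1 + K).
have delta0 : 0 < delta by rewrite divr_gt0 // ltr_pwDl.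
have near_w : (0 < P (\bigcap_(n in [set n | n \in [set: 'I_N]%SET])
                         X n @^-1` ball (w n) delta))%E.
  apply: independent_rV_bigcap_gt0 => // n.
    by apply: sub_sigma_algebra; exact: ball_open.
  by apply: hw; [exact: ball_open | exact: ballxx].
apply: (lt_le_trans near_w); apply: le_measure; rewrite ?inE.
- apply: fin_bigcap_measurable => [|n _]; first exact: finite_finset.
  exact: rv_rV_open (ball_open _ _).
- by apply: rv_rV_open; first exact: rv_rV_lin_comb.
move=> t Xt; apply: eA; rewrite -ball_normE /ball_ /=.
apply: le_lt_trans (ler_norm_lin_combB _ _ _) _.
apply: (@le_lt_trans _ _ (\sum_(n < N) `|gamma n| * delta)).
  apply: ler_sum => n _; apply: ler_wpM2l => //; apply: ltW.
  by have := Xt n (finset.in_setT n); rewrite -ball_normE.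
by rewrite -mulr_suml -/K /delta mulrA ltr_pdivrMr ?ltr_pwDl //; lra.
Qed.

End support.

Theorem corollary6p12 (R : realType) (d N : nat) (gamma : 'I_N -> R)
  (dT : measure_display) (T : measurableType dT) (P : probability T R)
  (X : 'I_N -> T -> 'rV[R]_d) :
  (forall n, rv_rV (X n)) ->
  independent_rV P X ->
  forall m : 'I_N, gamma m != 0 ->
  nondegenerate_rV P (X m) ->
  nondegenerate_rV P (fun w => \sum_(n < N) gamma n *: X n w).
Proof.
move=> hX hind m gm [z0 /nbhs_ballP[r /= r0 z0r_supp]].
have /fin_all_exists[y y_supp] : forall n, exists y, supp_rV P (X n) y.
  by move=> n; exact: supp_rV_neq0.
pose c := \sum_(n < N | n != m) gamma n *: y n.
have supp_affine z : supp_rV P (X m) z ->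
    supp_rV P (fun w => \sum_(n < N) gamma n *: X n w) (c + gamma m *: z).
  move=> z_supp; pose v n := if n == m then z else y n.
  have -> : c + gamma m *: z = \sum_(n < N) gamma n *: v n.
    rewrite (bigD1 m) //= /v eqxx addrC; congr (_ + _).
    by apply: eq_bigr => n /negbTE ->.
  by apply: supp_rV_lin_comb => // n; rewrite /v; case: eqP => [->|].
exists (c + gamma m *: z0); apply/nbhs_ballP; exists (`|gamma m| * r).
  by rewrite /= mulr_gt0 ?normr_gt0.
move=> x /(ball_sub_affine_image gm)[z /z0r_supp z_supp <-].
exact: supp_affine.
Qed.
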